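(* There exist a nondeterministic planning domain $D$ and a goal $\psi$ which is an LTL$_f$ formula (equally read as an LTL formula) such that: (a) there is no policy $f$ with $(D,f)\models A^{\text{sa-fair}}\psi$, i.e., the state-action fair planning problem $\langle D,\psi\rangle$ has no solution; but (b) for every deterministic automaton $A_\psi$ over the alphabet $2^{\mathcal{F}\cup\mathcal{A}}$ accepting exactly the infinite traces that satisfy $\psi$, the state-action fair planning problem $\langle D',Acc\rangle$ has a solution, where $D'=D\times A_\psi$ is the synchronous product and $Acc$ is the goal consisting of those infinite traces of $D'$ whose projection to $D$ is accepted by $A_\psi$.
   Context: A nondeterministic planning domain is a tuple $D=(St,Act,s_0,Tr)$ with finite state set $St=2^{\mathcal{F}}$ (assignments to fluents $\mathcal{F}$), finite action set $Act=2^{\mathcal{A}}$, initial state $s_0$, and $Tr\subseteq St\times Act\times St$; every state has an applicable action. A trace is a finite or infinite sequence $(s_0\cup a_0)(s_1\cup a_1)\cdots$ starting at $s_0$ with $(s_{i-1},a_{i-1},s_i)\in Tr$. A policy is a function $f:St^+\to Act$ with $f(u)$ applicable in the last state of $u$; an $f$-trace is a trace with $f(s_0\cdots s_i)=a_i$ for all prefixes. LTL/LTL$_f$: usual syntax with atoms, $\neg$, $\wedge$, next $X$, until $U$; LTL$_f$ is interpreted on finite sequences ($X\psi$ at $j$ requires position $j+1$ to exist), and an infinite trace satisfies an LTL$_f$ formula if some finite prefix does. A goal is a set of infinite traces; a policy $f$ solves the state-action fair planning problem $\langle D,G\rangle$ if every infinite state-action fair $f$-trace is in $G$, where an infinite trace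 is state-action fair if for every transition $(s,a,s')\in Tr$, if $s,a$ occurs infinitely often then $s,a$ immediately followed by $s'$ occurs infinitely often. $(D,f)\models A^{\text{sa-fair}}\psi$ means $f$ solves the state-action fair problem with goal the set of traces satisfying $\psi$. A deterministic automaton is $(\Sigma,Q,q_0,\delta,\mathcal{C})$ with $\delta:Q\times\Sigma\to Q$, where an infinite word is accepted iff its unique run satisfies the acceptance condition $\mathcal{C}$ (of any type). The synchronous product $D\times A$ is the domain whose states are pairs $(d,q)$, initial state $(s_0,q_0)$, with a transition from $(d,q)$ to $(d',q')$ on action $a$ iff $(d,a,d')\in Tr$ and $\delta(q,d\cup a)=q'$; state-action fairness and policies in $D\times A$ are defined with respect to its own states and transitions. *)

From mathcomp Require Import all_boot.
Set Implicit Arguments.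
Unset Strict Implicit.
Unset Printing Implicit Defensive.

Definition inf_often (P : nat -> Prop) : Prop :=
  forall N, exists i, N <= i /\ P i.

Record domain (St Act : finType) := Domain {
  init : St;
  trans : St -> Act -> St -> bool;
  trans_total : forall s, exists a s', trans s a s'
}.

Section Domains.
Variables (St Act : finType) (D : domain St Act).

Definition applicable (s : St) (a : Act) : Prop := exists s', trans D s a s'.

(* infinite traces (s_0 u a_0)(s_1 u a_1)... represented as pairs *)
Definition is_trace (t : nat -> St * Act) : Prop :=
  (t 0).1 = init D /\ forall i, trans D (t i).1 (t i).2 (t i.+1).1.

Definition prefix (t : nat -> St * Act) (i : nat) : seq St :=
  [seq (t j).1 | j <- iota 0 i.+1].

(* policies f : St^+ -> Act (value on the empty sequence is irrelevant) *)
Definition is_policy (f : seq St -> Act) : Prop :=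
  forall u : seq St, u != [::] -> applicable (last (init D) u) (f u).

Definition is_ftrace (f : seq St -> Act) (t : nat -> St * Act) : Prop :=
  forall i, f (prefix t i) = (t i).2.

Definition sa_fair (t : nat -> St * Act) : Prop :=
  forall s a s', trans D s a s' ->
    inf_often (fun i => t i = (s, a)) ->
    inf_often (fun i => t i = (s, a) /\ (t i.+1).1 = s').

Definition solves (f : seq St -> Act) (G : (nat -> St * Act) -> Prop) : Prop :=
  forall t, is_trace t -> is_ftrace f t -> sa_fair t -> G t.

Definition solvable (G : (nat -> St * Act) -> Prop) : Prop :=
  exists f, is_policy f /\ solves f G.
End Domains.

Inductive ltl (X : Type) :=
| LAtom of X
| LNot of ltl X
| LAnd of ltl X & ltl X
| LNext of ltl X
| LUntil of ltl X & ltl X.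

(* satisfaction at position j of the finite prefix w_0 ... w_(n-1) of w *)
Fixpoint satf (X : Type) (w : nat -> X -> bool) (n j : nat) (phi : ltl X) : Prop :=
  match phi with
  | LAtom x => w j x
  | LNot p => ~ satf w n j p
  | LAnd p q => satf w n j p /\ satf w n j q
  | LNext p => j.+1 < n /\ satf w n j.+1 p
  | LUntil p q => exists k, j <= k < n /\ satf w n k q /\
                    forall l, j <= l < k -> satf w n l p
  end.

Definition ltlf_inf (X : Type) (w : nat -> X -> bool) (phi : ltl X) : Prop :=
  exists n, 0 < n /\ satf w n 0 phi.

(* letters of 2^(F u A) are pairs (state, action) *)
Definition letter (F A : finType) := ({set F} * {set A})%type.

Definition letter_val (F A : finType) (l : letter F A) (x : F + A) : bool :=
  match x with inl f => f \in l.1 | inr p => p \in l.2 end.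

Definition ltlf_goal (F A : finType) (psi : ltl (F + A))
  : (nat -> letter F A) -> Prop :=
  fun t => ltlf_inf (fun i => letter_val (t i)) psi.

Record dmuller (Sigma : Type) (Q : finType) := DMuller {
  q0 : Q;
  delta : Q -> Sigma -> Q;
  table : {set {set Q}}
}.

Fixpoint run (Sigma : Type) (Q : finType) (M : dmuller Sigma Q)
  (w : nat -> Sigma) (i : nat) : Q :=
  match i with
  | 0 => q0 M
  | i'.+1 => delta M (run M w i') (w i')
  end.

Definition accepts (Sigma : Type) (Q : finType) (M : dmuller Sigma Q)
  (w : nat -> Sigma) : Prop :=
  exists S : {set Q}, S \in table M /\
    forall q, q \in S <-> inf_often (fun i => run M w i = q).

Definition prod_trans (F A : finType) (Q : finType)
  (D : domain {set F} {set A})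
  (M : dmuller (letter F A) Q)
  (dq : {set F} * Q) (a : {set A}) (dq' : {set F} * Q) : bool :=
  trans D dq.1 a dq'.1 && (delta M dq.2 (dq.1, a) == dq'.2).

Lemma prod_total (F A : finType) (Q : finType)
  (D : domain {set F} {set A})
  (M : dmuller (letter F A) Q) :
  forall s, exists a s', prod_trans D M s a s'.
Proof.
move=> [d q]; have [a [d' H]] := trans_total D d.
by exists a, (d', delta M q (d, a)); rewrite /prod_trans /= H eqxx.
Qed.

Definition prod_dom (F A : finType) (Q : finType)
  (D : domain {set F} {set A})
  (M : dmuller (letter F A) Q) : domain ({set F} * Q)%type {set A} :=
  Domain (init D, q0 M) (@prod_total F A Q D M).

Definition Acc (F A : finType) (Q : finType) (M : dmuller (letter F A) Q)
  : (nat -> ({set F} * Q) * {set A}) -> Prop :=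
  fun t => accepts M (fun i => ((t i).1.1, (t i).2)).

From mathcomp Require Import all_boot zify.
From Stdlib Require Import Classical.
Set Implicit Arguments.
Unset Strict Implicit.
Unset Printing Implicit Defensive.

(* The domain has one fluent p, no actions, and allows every transition; the
   goal asks for p at three consecutive steps.  A policy over domain states
   cannot exclude the fair trace with p-pattern (~p ~p p p)^omega.  In the
   product with an automaton, fairness is relative to automaton states: some
   state (p, q1) recurs, hence so does its p-successor (p, q2), and some visit
   of (p, q2) at position j is again followed by p.  Muller acceptance only
   depends on the state reached and on the remaining input.  Since q2 is
   entered right after a p, reading p p ~p ~p ... from q2 is accepted; hence
   so is the word that follows the actual trace up to position j+1 and then
   reads ~p forever, and its three consecutive p's lie in the actual trace. *)

Lemma inf_often_shift (P P' : nat -> Prop) i i' :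
  (forall k, P (i + k) -> P' (i' + k)) -> inf_often P -> inf_often P'.
Proof.
move=> PP' often_P N; have [j [le_Nij Pj]] := often_P (N + i).
exists (i' + (j - i)); split; first by lia.
by apply: PP'; rewrite subnKC //; lia.
Qed.

Lemma inf_often_periodic (P : nat -> Prop) n i :
  0 < n -> (forall k, P k -> P (k + n)) -> P i -> inf_often P.
Proof.
move=> n_gt0 Pn Pi N; exists (i + N * n); split.
  by rewrite (leq_trans (leq_pmulr N n_gt0)) ?leq_addl.
elim: N => [|N IH]; first by rewrite mul0n addn0.
by rewrite mulSnr addnA; apply: Pn.
Qed.

Lemma inf_often_pigeonhole (T : finType) (g : nat -> T) :
  exists x, inf_often (fun i => g i = x).
Proof.
apply: NNPP => none_often.
have eventually_avoid (s : seq T) : exists N, forall i, N <= i -> g i \notin s.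
  elim: s => [|x s [N avoid_s]]; first by exists 0.
  have /not_all_ex_not [Nx avoid_x] : ~ inf_often (fun i => g i = x).
    by move=> often_x; apply: none_often; exists x.
  exists (maxn N Nx) => i; rewrite geq_max => /andP [le_Ni le_Nxi].
  rewrite in_cons negb_or avoid_s // andbT; apply/eqP => gix.
  by apply: avoid_x; exists i.
have [N avoid_all] := eventually_avoid (enum T).
by move: (avoid_all N (leqnn N)); rewrite mem_enum.
Qed.

Section Runs.
Variables (Sigma : Type) (Q : finType) (M : dmuller Sigma Q).

Lemma eq_run_prefix (w w' : nat -> Sigma) n :
  (forall k, k < n -> w k = w' k) -> run M w n = run M w' n.
Proof.
elim: n => //= n IH eq_ww'; rewrite IH ?eq_ww' // => k lt_kn.
by apply: eq_ww'; apply: ltnW.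
Qed.

Lemma run_shift (w w' : nat -> Sigma) i i' :
  run M w i = run M w' i' -> (forall k, w (i + k) = w' (i' + k)) ->
  forall k, run M w (i + k) = run M w' (i' + k).
Proof.
move=> eq_run eq_suffix; elim=> [|k IH]; first by rewrite !addn0.
by rewrite !addnS /= IH eq_suffix.
Qed.

Lemma accepts_shift (w w' : nat -> Sigma) i i' :
  run M w i = run M w' i' -> (forall k, w (i + k) = w' (i' + k)) ->
  accepts M w -> accepts M w'.
Proof.
move=> eq_run eq_suffix [S [S_table S_inf]]; exists S; split=> // q.
have eq_runs := run_shift eq_run eq_suffix.
rewrite S_inf; split.
  by apply: (@inf_often_shift _ _ i i') => k /=; rewrite eq_runs.
by apply: (@inf_often_shift _ _ i' i) => k /=; rewrite eq_runs.
Qed.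

Definition splice (w v : nat -> Sigma) n k : Sigma :=
  if k < n then w k else v (k - n).

Lemma accepts_splice (w w' v : nat -> Sigma) n n' :
  run M w n = run M w' n' ->
  accepts M (splice w v n) -> accepts M (splice w' v n').
Proof.
move=> eq_run; apply: (@accepts_shift _ _ n n').
  rewrite (@eq_run_prefix _ w) => [|k lt_kn]; last by rewrite /splice lt_kn.
  rewrite [RHS](@eq_run_prefix _ w') // => k lt_kn.
  by rewrite /splice lt_kn.
by move=> k; rewrite /splice !ltnNge !leq_addr /= !addKn.
Qed.
End Runs.

Section ProductTraces.
Variables (F A Q : finType) (D : domain {set F} {set A}).
Variable M : dmuller (letter F A) Q.

Definition proj_trace (t : nat -> ({set F} * Q) * {set A}) (i : nat) :
  letter F A := ((t i).1.1, (t i).2).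

Lemma run_proj_trace t :
  is_trace (prod_dom D M) t -> forall i, run M (proj_trace t) i = (t i).1.2.
Proof.
move=> [t0 t_step]; elim=> [|i IH]; first by rewrite t0.
move: (t_step i); rewrite /= /prod_trans => /andP [_ /eqP <-].
by rewrite /= IH.
Qed.

Lemma prod_trans_step d a d' q :
  trans D d a d' -> trans (prod_dom D M) (d, q) a (d', delta M q (d, a)).
Proof. by move=> dad'; rewrite /= /prod_trans /= dad' eqxx. Qed.
End ProductTraces.

Section DerivedLTL.
Variable X : Type.

Definition LTrue (x : X) : ltl X := LNot (LAnd (LAtom x) (LNot (LAtom x))).

Definition LEventually (x : X) (phi : ltl X) : ltl X := LUntil (LTrue x) phi.

Definition LThrice (phi : ltl X) : ltl X :=
  LAnd phi (LNext (LAnd phi (LNext phi))).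

Lemma satf_eventually (w : nat -> X -> bool) n j x phi :
  satf w n j (LEventually x phi) <-> exists2 k, j <= k < n & satf w n k phi.
Proof.
split=> [[k [kn [phik _]]] | [k kn phik]]; first by exists k.
by exists k; do 2!split=> //; move=> l _ [].
Qed.

Lemma satf_thrice (w : nat -> X -> bool) n k phi :
  satf w n k (LThrice phi) <->
  [/\ k.+2 < n, satf w n k phi, satf w n k.+1 phi & satf w n k.+2 phi].
Proof.
split=> [[? [_ [? [? ?]]]] | [lt_k2n ? ? ?]]; first by split.
by do !split=> //; lia.
Qed.
End DerivedLTL.

Definition p_atom : unit + void := inl tt.

Definition psi : ltl (unit + void) :=
  LEventually p_atom (LThrice (LAtom p_atom)).

Definition p_holds (l : letter unit void) : bool := tt \in l.1.

Definition p_thrice_at (w : nat -> letter unit void) (k : nat) : bool :=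
  [&& p_holds (w k), p_holds (w k.+1) & p_holds (w k.+2)].

Lemma ltlf_goal_psiP (w : nat -> letter unit void) :
  ltlf_goal psi w <-> exists k, p_thrice_at w k.
Proof.
rewrite /ltlf_goal /ltlf_inf /psi.
split=> [[n [_]] | [k /and3P [? ? ?]]].
  move=> /satf_eventually [k _] /satf_thrice [_ ? ? ?].
  by exists k; apply/and3P.
exists k.+3; split=> //.
by apply/satf_eventually; exists k; [lia | apply/satf_thrice].
Qed.

Lemma set_void0 (a : {set void}) : a = set0.
Proof. by apply/setP => -[]. Qed.

Lemma unit_setE (s : {set unit}) : s = [set _ | tt \in s].
Proof. by apply/setP => -[]; rewrite inE. Qed.

Definition free_dom : domain {set unit} {set void} :=
  @Domain _ _ set0 (fun _ _ _ => true)
    (fun s => ex_intro _ set0 (ex_intro _ s isT)).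

Definition pulse (i : nat) : bool := 2 <= i %% 4.

Definition pulse_trace (i : nat) : {set unit} * {set void} :=
  ([set _ | pulse i], set0).

Lemma pulse_trace_fair : sa_fair free_dom pulse_trace.
Proof.
move=> s a s' _ _; rewrite (unit_setE s) (unit_setE s') (set_void0 a).
move: (tt \in s) (tt \in s') => b b'.
suff: inf_often (fun i => pulse i = b /\ pulse i.+1 = b').
  by apply: (@inf_often_shift _ _ 0 0) => k [<- <-].
have [r pulse_r] : exists r, pulse r = b /\ pulse r.+1 = b'.
  by case: b; case: b'; [exists 2 | exists 3 | exists 1 | exists 0].
apply: (@inf_often_periodic _ 4 r) => // k.
by rewrite /pulse -addSn !modnDr.
Qed.

Lemma pulse_trace_not_p_thrice k : ~~ p_thrice_at pulse_trace k.
Proof. by rewrite /p_thrice_at /p_holds /= !inE /pulse; lia. Qed.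

Lemma psi_unsolvable : ~ solvable free_dom (ltlf_goal psi).
Proof.
move=> [f [_ f_solves]].
have /ltlf_goal_psiP [k] : ltlf_goal psi pulse_trace.
  apply: f_solves; last exact: pulse_trace_fair.
  - by split=> //; apply/setP => -[]; rewrite !inE.
  - by move=> i; rewrite [f _]set_void0.
by apply/negP: (pulse_trace_not_p_thrice k).
Qed.

Section ProductSolution.
Variables (Q : finType) (M : dmuller (letter unit void) Q).
Hypothesis M_psi : forall w, accepts M w <-> ltlf_goal psi w.

Lemma p_thrice_of_run_collision (w : nat -> letter unit void) i j :
  p_holds (w i) -> run M w i.+1 = run M w j ->
  p_holds (w j) -> p_holds (w j.+1) -> exists k, p_thrice_at w k.
Proof.
move=> p_i eq_run p_j p_j1.
pose v k : letter unit void := ([set _ | k < 2], set0).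
have /M_psi/ltlf_goal_psiP [k thrice_k] : accepts M (splice w v j).
  apply: (accepts_splice eq_run); apply/M_psi/ltlf_goal_psiP; exists i.
  rewrite /p_thrice_at /splice ltnSn ltnn ltnNge leqnSn p_i.
  by rewrite /p_holds /v !inE subnn subSnn.
have p_of_spliced m : p_holds (splice w v j m) -> p_holds (w m).
  rewrite /splice; case: ltnP => // le_jm; rewrite /p_holds inE => lt_mj2.
  by have [-> | ->] : m = j \/ m = j.+1 by lia.
exists k; move: thrice_k => /and3P [/p_of_spliced ? /p_of_spliced ?].
by move/p_of_spliced => ?; apply/and3P.
Qed.

Section FairTrace.
Variable t : nat -> ({set unit} * Q) * {set void}.
Hypotheses (t_trace : is_trace (prod_dom free_dom M) t)
           (t_fair : sa_fair (prod_dom free_dom M) t).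

Lemma trace_actionE i : t i = ((t i).1, set0).
Proof. by case: (t i) => x a; rewrite (set_void0 a). Qed.

Lemma fair_step d q d' :
  inf_often (fun i => (t i).1 = (d, q)) ->
  inf_often (fun i =>
    (t i).1 = (d, q) /\ (t i.+1).1 = (d', delta M q (d, set0))).
Proof.
move=> often_dq.
have step : trans (prod_dom free_dom M) (d, q) set0 (d', delta M q (d, set0)).
  exact: prod_trans_step.
apply: (@inf_often_shift _ _ 0 0 _ (t_fair step _)) => [k [-> ->] //|].
apply: (@inf_often_shift _ _ 0 0 _ often_dq) => k tk.
by rewrite trace_actionE tk.
Qed.

Lemma fair_visit d q d' :
  inf_often (fun i => (t i).1 = (d, q)) ->
  inf_often (fun i => (t i).1 = (d', delta M q (d, set0))).
Proof.
by move/(fair_step d'); apply: (@inf_often_shift _ _ 0 1) => k [_].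
Qed.

Lemma fair_trace_accepted : accepts M (proj_trace t).
Proof.
have run_t := run_proj_trace t_trace.
have [[d q] often_dq] := inf_often_pigeonhole (fun i => (t i).1).
set q1 := delta M q (d, set0); set q2 := delta M q1 (setT, set0).
have often_q1 : inf_often (fun i => (t i).1 = (setT, q1)).
  exact: fair_visit.
have [i [_ [t_i t_i1]]] := fair_step setT often_q1 0.
have [j [_ [t_j t_j1]]] := fair_step setT (fair_visit setT often_q1) 0.
apply/M_psi/ltlf_goal_psiP; apply: (@p_thrice_of_run_collision _ i j).
- by rewrite /p_holds /= t_i inE.
- by rewrite !run_t t_i1 t_j.
- by rewrite /p_holds /= t_j inE.
- by rewrite /p_holds /= t_j1 inE.
Qed.
End FairTrace.

Lemma psi_product_solvable : solvable (prod_dom free_dom M) (Acc M).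
Proof.
exists (fun _ => set0); split.
  move=> u _; case: (last _ u) => d q.
  by exists (d, delta M q (d, set0)); apply: prod_trans_step.
by move=> t t_trace _ t_fair; apply: fair_trace_accepted.
Qed.
End ProductSolution.

Theorem theorem1 :
  exists (F A : finType)
         (D : domain {set F} {set A})
         (psi : ltl (F + A)),
    ~ solvable D (ltlf_goal psi) /\
    (forall (Q : finType) (M : dmuller (letter F A) Q),
       (forall w : nat -> letter F A, accepts M w <-> ltlf_goal psi w) ->
       solvable (prod_dom D M) (Acc M)).
Proof.
exists unit, void, free_dom, psi; split; first exact: psi_unsolvable.
by move=> Q M; apply: psi_product_solvable.
Qed.
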